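(* For every unit interval graph $G$ on $[n]$, $$Y_G=\sum_{D\in\mathcal A(G)}(-1)^{a(D)}\,e_1\uparrow_D .$$
   Context: Work in $\mathrm{NCSym}$ (symmetric functions in non-commuting variables $x_1,x_2,\dots$ over $\mathbb Q$); $e_1=p_1=x_1+x_2+\cdots$. A unit interval graph $G$ on $[n]$ is given by intervals $[a_1,1],\dots,[a_n,n]$ with $1\le a_1\le\cdots\le a_n$, $a_k\le k$; it has an edge between distinct $i,j$ whenever $i,j\in[a_k,k]$ for some $k$. $Y_G=\sum_\kappa x_{\kappa(1)}\cdots x_{\kappa(n)}$ over proper colorings $\kappa:[n]\to\{1,2,\dots\}$. Inducing: for $1\le j\le m-1$, $x_{i_1}\cdots x_{i_{m-1}}\uparrow_j^m=x_{i_1}\cdots x_{i_{m-1}}x_{i_j}$, extended linearly to homogeneous degree $m-1$ elements, and $f\uparrow_m^m=f\,p_1$. An arc diagram on $[n]$ is a set of arcs $(i,j)$ with $1\le i<j\le n$ such that each vertex $j$ is the right endpoint of at most one arc (its left arc). $\mathcal A(G)$ is the set of arc diagrams on $[n]$ all of whose arcs $(i,j)$ satisfy $i,j\in[a_k,k]$ for some $k$. For $D\in\mathcal A(G)$ let $a(D)$ be its number of arcs, and for $2\le j\le n$ let $i_j$ be the left endpoint of the left arc of $j$ if it exists, and $i_j=j$ otherwise; then $e_1\uparrow_D=e_1\uparrow_{i_2}^2\uparrow_{i_3}^3\cdots\uparrow_{i_n}^n$ (inducings applied successively from left to right). *)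

From HB Require Import structures.
From mathcomp Require Import all_boot all_order all_algebra.
Set Implicit Arguments. Unset Strict Implicit. Unset Printing Implicit Defensive.
Import Order.TTheory GRing.Theory Num.Theory.
Local Open Scope ring_scope.

(* A homogeneous noncommutative formal power series over Q in x_1, x_2, ...
   is represented by its coefficient function on words: the word
   [:: i_1; ...; i_m] (letters i_k >= 1) stands for the monomial
   x_{i_1} ... x_{i_m}. *)
Definition series := seq nat -> rat.

Definition e1 : series := fun w => if size w == 1%N then 1 else 0.

(* Inducing f (homogeneous of degree m-1) from m-1 to m at position j:
   x_{i_1}...x_{i_{m-1}} |-> x_{i_1}...x_{i_{m-1}} x_{i_j} for j < m, and
   f |-> f * p_1 for j = m. *)
Definition induce (j m : nat) (f : series) : series := fun w =>
  if (j < m)%N then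
    (if nth 0%N w j.-1 == nth 0%N w m.-1 then f (take m.-1 w) else 0)
  else f (take m.-1 w).

(* Edge relation of the unit interval graph given by [a_k, k], 1 <= k <= n
   (vertices 1-based). *)
Definition uig_edge (n : nat) (a : nat -> nat) (i j : nat) : bool :=
  (i != j) && [exists k : 'I_n, (a k.+1 <= i <= k.+1)%N && (a k.+1 <= j <= k.+1)%N].

(* Y_G: coefficient of w is 1 iff w = kappa(1)...kappa(n) for a proper
   coloring kappa : [n] -> {1,2,...}. *)
Definition YG (n : nat) (a : nat -> nat) : series := fun w =>
  if [&& size w == n, all (fun c => 0 < c)%N w &
       [forall i : 'I_n, forall j : 'I_n,
          uig_edge n a i.+1 j.+1 ==> (nth 0%N w i != nth 0%N w j)]]
  then 1 else 0.

(* Arc diagrams on [n]: sets of arcs (i,j), vertices taken in 'I_n.+1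
   (values 0..n, value 0 excluded by the condition 1 <= i). *)
Definition arc_diagram (n : nat) (D : {set 'I_n.+1 * 'I_n.+1}) : bool :=
  [forall p in D, (0 < p.1 < p.2)%N] &&
  [forall j : 'I_n.+1, #|[set p in D | p.2 == j]| <= 1]%N.

Definition inAG (n : nat) (a : nat -> nat) (D : {set 'I_n.+1 * 'I_n.+1}) : bool :=
  arc_diagram D &&
  [forall p in D, exists k : 'I_n,
     (a k.+1 <= p.1 <= k.+1)%N && (a k.+1 <= p.2 <= k.+1)%N].

Definition leftpt (n : nat) (D : {set 'I_n.+1 * 'I_n.+1}) (j : nat) : nat :=
  if [pick p in D | (p.2 : nat) == j] is Some p then (p.1 : nat) else j.

Fixpoint e1up (n : nat) (D : {set 'I_n.+1 * 'I_n.+1}) (m : nat) : series :=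
  match m with
  | 0 => e1
  | 1 => e1
  | m'.+1 => induce (leftpt D m) m (e1up D m')
  end.

From HB Require Import structures.
From mathcomp Require Import all_boot all_order all_algebra zify.
Import Order.TTheory GRing.Theory Num.Theory.
Local Open Scope ring_scope.

(* Fix a word w = w_1 ... w_n with positive letters, read as a colouring of
   the vertices of G.  Call i a left neighbour of j if i < j lie in a common
   interval [a_k, k], and call such an i a conflict of j if w_i = w_j.
   1. The coefficient of w in Y_G is 1 iff no vertex has a conflict.
   2. The left neighbours of any vertex are pairwise adjacent (an interval
      containing i and j contains everything between them), so the first
      vertex with a conflict has exactly one; hence
      \prod_j (1 - #conflicts(j)) is again the indicator of "no conflict".
   3. Expanding this product chooses for every j either nothing or a left
      neighbour i of j with weight -[w_i = w_j]; such choice functions are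
      exactly the arc diagrams of A(G), arcs (i,j) being the choices.
   4. The coefficient of w in e_1 up_D is \prod over arcs (i,j) of
      [w_i = w_j], so each diagram D contributes (-1)^#|D| times it.
   Vertices are elements of 'I_n.+1; the value 0 is never a vertex. *)

Lemma big_option (R : nmodType) (T : finType) (F : option T -> R) :
  \sum_(o : option T) F o = F None + \sum_(x : T) F (Some x).
Proof.
rewrite (bigD1 None) //=; congr (_ + _).
rewrite (reindex_omap Some id); last by case.
by apply: eq_big => // x; rewrite eqxx.
Qed.

Definition colour (w : seq nat) (v : nat) : nat := nth 0%N w v.-1.

Lemma colour_take (w : seq nat) k v :
  (v <= k.+1)%N -> colour (take k.+1 w) v = colour w v.
Proof. by move=> vk; rewrite /colour nth_take //; lia. Qed.

Section Conflicts.
Variables (n : nat) (a : nat -> nat).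

Definition left_adj (i j : nat) : bool :=
  (0 < i < j)%N &&
  [exists k : 'I_n, (a k.+1 <= i <= k.+1)%N && (a k.+1 <= j <= k.+1)%N].

(* The left neighbours of a vertex form a clique: this is the only place
   where the interval structure of G matters. *)
Lemma left_adj_clique {i i' j : nat} :
  left_adj i j -> left_adj i' j -> (i < i')%N -> left_adj i i'.
Proof.
case/andP=> /andP [i0 _] /existsP [k /andP [/andP [ai _] /andP [_ jk]]].
case/andP=> /andP [_ i'j] _ ii'.
rewrite /left_adj i0 ii'; apply/existsP; exists k.
apply/andP; split; apply/andP; split; lia.
Qed.

Variable w : seq nat.

Definition conflicts (j : 'I_n.+1) : nat :=
  #|[pred i : 'I_n.+1 | left_adj i j && (colour w i == colour w j)]|.

Definition conflict_free : bool := [forall j : 'I_n.+1, conflicts j == 0%N].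

Lemma conflict_freeP :
  conflict_free -> forall x y, left_adj x y -> (y <= n)%N -> colour w x != colour w y.
Proof.
move=> /forallP free x y xy yn.
move: (free (inord y)) => /eqP/card0_eq/(_ (inord x)).
have x_lt_y : (x < y)%N by case/andP: xy => /andP [].
apply: contraFN => /eqP same.
by rewrite !inE /= !inordK ?xy ?same //; lia.
Qed.

Lemma YG_conflict_free : size w = n -> all (fun c => 0 < c)%N w ->
  YG n a w = (if conflict_free then 1 else 0).
Proof.
move=> sw pw; rewrite /YG sw eqxx pw /=.
congr (if _ then _ else _); apply/idP/idP.
- move=> proper; apply/forallP => j; apply/eqP/eq_card0 => i; rewrite !inE /=.
  apply/negbTE/negP => /andP [ij /eqP same].
  have [/andP [i0 i_lt_j] /existsP [k /andP [hi hj]]] := andP ij.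
  have jn := ltn_ord j.
  have i'n : (i.-1 < n)%N by lia.
  have j'n : (j.-1 < n)%N by lia.
  move/forallP: proper => /(_ (Ordinal i'n)) /forallP /(_ (Ordinal j'n)) /implyP.
  rewrite /= !prednK ?(leq_trans i0 (ltnW i_lt_j)) //.
  have -> : uig_edge n a i j.
    by rewrite /uig_edge (ltn_eqF i_lt_j) /=; apply/existsP; exists k; rewrite hi hj.
  by move=> /(_ isT); rewrite /colour in same; rewrite same eqxx.
- move=> free; apply/forallP => i; apply/forallP => j; apply/implyP.
  case/andP => ij /existsP [k /andP [hi hj]].
  move: ij; rewrite neq_ltn => /orP [] h.
  + apply: (conflict_freeP free i.+1 j.+1 _ (ltn_ord j)).
    by rewrite /left_adj h /=; apply/existsP; exists k; rewrite hi hj.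
  + rewrite eq_sym; apply: (conflict_freeP free j.+1 i.+1 _ (ltn_ord i)).
    by rewrite /left_adj h /=; apply/existsP; exists k; rewrite hi hj.
Qed.

(* If no vertex before j has a conflict, then j has at most one: two
   conflicts x < y of j would make x a conflict of y, by the clique lemma. *)
Lemma first_conflict_unique (j : 'I_n.+1) :
  (forall y : 'I_n.+1, (y < j)%N -> conflicts y = 0%N) -> (conflicts j <= 1)%N.
Proof.
move=> before; apply/card_le1_eqP => x y.
rewrite !inE /= => /andP [xj /eqP cx] /andP [yj /eqP cy].
have no_pair (u v : 'I_n.+1) : left_adj u j -> colour w u = colour w j ->
    left_adj v j -> colour w v = colour w j -> ~ (u < v)%N.
  move=> uj cu vj cv uv; have /eqP := before v (proj2 (andP (proj1 (andP vj)))).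
  apply/negP; rewrite -lt0n; apply/card_gt0P; exists u.
  by rewrite inE /= (left_adj_clique uj vj uv) cu cv eqxx.
apply/val_inj/eqP; case: ltngtP => // lt.
  by have := no_pair y x yj cy xj cx lt.
by have := no_pair x y xj cx yj cy lt.
Qed.

Lemma prod_conflicts :
  \prod_(j : 'I_n.+1) (1 - (conflicts j)%:R) = if conflict_free then 1 else 0 :> rat.
Proof.
case: (boolP conflict_free) => [free | ].
  by apply: big1 => j _; rewrite (eqP (forallP free j)) subr0.
rewrite negb_forall => /existsP [j0 cj0].
case: (@arg_minnP _ j0 (fun j => conflicts j != 0%N) val cj0) => j cj jmin.
have before (y : 'I_n.+1) : (y < j)%N -> conflicts y = 0%N.
  by move=> yj; apply/eqP; apply: contraTT yj => cy; rewrite -leqNgt jmin.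
have c1 : conflicts j = 1%N.
  by apply/eqP; rewrite eqn_leq lt0n cj andbT first_conflict_unique.
by rewrite (bigD1 j) //= c1 subrr mul0r.
Qed.

Definition choice_weight (j : 'I_n.+1) (o : option 'I_n.+1) : rat :=
  if o is Some i then (if left_adj i j then - (colour w i == colour w j)%:R else 0)
  else 1.

Lemma prod_conflicts_expand :
  \prod_(j : 'I_n.+1) (1 - (conflicts j)%:R) =
  \sum_(f : {ffun 'I_n.+1 -> option 'I_n.+1}) \prod_j choice_weight j (f j).
Proof.
rewrite -(bigA_distr_bigA choice_weight); apply: eq_bigr => j _.
rewrite big_option /=; congr (_ + _).
rewrite /conflicts -sum1_card natr_sum -sumrN big_mkcond /=.
apply: eq_bigr => i _; rewrite !inE /=.
by case: (left_adj i j); case: (colour w i == colour w j).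
Qed.

End Conflicts.

Section ArcDiagrams.
Context {n : nat} (a : nat -> nat).
Local Notation vertex := 'I_n.+1.
Local Notation diagram := {set 'I_n.+1 * 'I_n.+1}.
Local Notation choice := {ffun 'I_n.+1 -> option 'I_n.+1}.

Definition left_arc (D : diagram) (j : nat) : option (vertex * vertex) :=
  [pick p in D | (p.2 : nat) == j].

Variant left_arc_spec (D : diagram) (j : nat) : option (vertex * vertex) -> Type :=
  | LeftArc p of p \in D & (p.2 : nat) = j : left_arc_spec D j (Some p)
  | NoLeftArc of (forall p, p \in D -> (p.2 : nat) != j) : left_arc_spec D j None.

Lemma left_arcP (D : diagram) (j : nat) : left_arc_spec D j (left_arc D j).
Proof.
rewrite /left_arc; case: pickP => [p /andP [pD /eqP pj] | none]; constructor => //.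
by move=> p pD; apply/negP => pj; have := none p; rewrite pD pj.
Qed.

Definition one_left_arc (D : diagram) : Prop :=
  forall p q, p \in D -> q \in D -> p.2 = q.2 -> p = q.

Lemma inAGP (D : diagram) :
  reflect ((forall p, p \in D -> left_adj n a p.1 p.2) /\ one_left_arc D)
          (inAG a D).
Proof.
apply: (iffP idP) => [/andP [/andP [pos le1] inG] | [adj uniq]].
  split=> [p pD | p q pD qD e].
    by rewrite /left_adj (forall_inP pos p pD) (forall_inP inG p pD).
  by apply: (card_le1_eqP (forallP le1 p.2)); rewrite !inE ?pD ?qD ?e eqxx.
apply/andP; split; [apply/andP; split|].
- by apply/forall_inP => p pD; case/andP: (adj p pD).
- apply/forallP => j; apply/card_le1_eqP => x y.
  rewrite !inE => /andP [xD /eqP xj] /andP [yD /eqP yj].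
  by apply: uniq; rewrite ?xj ?yj.
- by apply/forall_inP => p pD; case/andP: (adj p pD).
Qed.

Lemma left_arcE {D : diagram} {p : vertex * vertex} :
  one_left_arc D -> p \in D -> left_arc D p.2 = Some p.
Proof.
move=> uniq pD; case: left_arcP => [q qD qp | none].
  by congr Some; apply: uniq => //; apply: val_inj.
by have := none p pD; rewrite eqxx.
Qed.

Definition arc_set (f : choice) : diagram := [set p | f p.2 == Some p.1].

Definition arc_choice (D : diagram) : choice :=
  [ffun j : vertex => omap fst (left_arc D j)].

(* The choice functions with nonzero weight: every chosen vertex is a left
   neighbour. *)
Definition admissible (f : choice) : bool :=
  [forall j, if f j is Some i then left_adj n a i j else true].

Lemma arc_choiceK {D : diagram} : one_left_arc D -> arc_set (arc_choice D) = D.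
Proof.
move=> uniq; apply/setP => p; rewrite inE ffunE.
case: (boolP (p \in D)) => pD; first by rewrite (left_arcE uniq pD) /= eqxx.
case: left_arcP => [q qD qp | //] /=; apply: contraNF pD => /eqP [qp1].
suff -> : p = q by [].
by apply/eqP/andP; rewrite qp1 -(val_inj qp) !eqxx.
Qed.

Lemma arc_set_inj : injective arc_set.
Proof.
move=> f g fg; apply/ffunP => j.
have same i : (f j == Some i) = (g j == Some i).
  by have := congr1 (fun S : diagram => (i, j) \in S) fg; rewrite /= !inE.
case Ef: (f j) => [i|]; case Eg: (g j) => [i'|] //.
- by have := same i; rewrite Ef Eg eqxx => /esym /eqP.
- by have := same i; rewrite Ef Eg eqxx.
- by have := same i'; rewrite Ef Eg eqxx.
Qed.

Lemma admissible_inAG {f : choice} : admissible f -> inAG a (arc_set f).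
Proof.
move=> adm; apply/inAGP; split=> [p | p q].
  by rewrite inE => /eqP fp; have := forallP adm p.2; rewrite fp.
rewrite !inE => /eqP fp /eqP fq e; move: fp; rewrite e fq => -[e1].
by apply/eqP/andP; rewrite e1 e !eqxx.
Qed.

Lemma arc_choice_admissible {D : diagram} : inAG a D -> admissible (arc_choice D).
Proof.
case/inAGP => adj _; apply/forallP => j; rewrite ffunE.
by case: left_arcP => [q qD <- | //]; apply: adj.
Qed.

Lemma arc_setK {f : choice} : admissible f -> arc_choice (arc_set f) = f.
Proof.
move=> adm; apply: arc_set_inj; apply: arc_choiceK.
by case/inAGP: (admissible_inAG adm).
Qed.

Lemma card_arcs {D : diagram} : one_left_arc D ->
  #|D| = (\sum_(j : vertex) (left_arc D j != None))%N.
Proof.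
move=> uniq; rewrite -sum1_card (partition_big snd predT) //=.
apply: eq_bigr => j _; rewrite sum1dep_card.
case: left_arcP => [q qD qj | none] /=.
- rewrite -(cards1 q); apply: eq_card => p; rewrite !inE.
  apply/idP/eqP => [/andP [pD /eqP pj] | ->]; last by rewrite qD; apply/eqP/val_inj.
  by apply: uniq => //; rewrite pj; apply: val_inj.
- apply/eqP; rewrite cards_eq0; apply/eqP/setP => p; rewrite !inE.
  by apply/negbTE/negP => /andP [pD /eqP pj]; have := none p pD; rewrite pj eqxx.
Qed.

End ArcDiagrams.

Section Weights.
Variable n : nat.
Local Notation diagram := {set 'I_n.+1 * 'I_n.+1}.

Definition arc_factor (w : seq nat) (D : diagram) (j : nat) : rat :=
  if left_arc D j is Some p then (colour w p.1 == colour w j)%:R else 1.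

Definition rightward (D : diagram) : Prop :=
  forall p, p \in D -> (0 < p.1 < p.2)%N.

Lemma arc_factor_take (D : diagram) w k j : rightward D -> (j <= k.+1)%N ->
  arc_factor (take k.+1 w) D j = arc_factor w D j.
Proof.
move=> right jk; rewrite /arc_factor; case: left_arcP => // p pD pj.
have /andP [_ p12] := right p pD.
by rewrite !colour_take // (leq_trans (ltnW p12)) // pj.
Qed.

Lemma e1up_arc_factors (D : diagram) m w : rightward D -> size w = m.+1 ->
  e1up D m.+1 w = \prod_(j < m.+2) arc_factor w D j.
Proof.
move=> right; elim: m w => [|m IH] w sw.
  rewrite /= /e1 sw /=; symmetry; apply: big1 => j _; rewrite /arc_factor.
  case: left_arcP => // p pD pj; have := right p pD; have := ltn_ord j; lia.
rewrite big_ord_recr /=.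
have -> : \prod_(j < m.+2) arc_factor w D j =
          \prod_(j < m.+2) arc_factor (take m.+1 w) D j.
  by apply: eq_bigr => j _; rewrite arc_factor_take // -ltnS.
rewrite -IH; last by rewrite size_take sw ltnSn.
rewrite /induce /leftpt -/(left_arc D m.+2) /arc_factor.
case: left_arcP => [p pD pj | _]; last by rewrite ltnn mulr1.
have /andP [_] := right p pD; rewrite pj => ->.
by rewrite /colour /=; case: eqP; rewrite ?mulr1 ?mulr0.
Qed.

Lemma diagram_weight (a : nat -> nat) (w : seq nat) (D : diagram) :
  (0 < n)%N -> size w = n -> inAG a D ->
  \prod_j choice_weight n a w j (arc_choice D j) = (-1) ^+ #|D| * e1up D n w.
Proof.
move=> n0 sw /inAGP [adj uniq].
have right : rightward D by move=> p /adj /andP [].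
have := @e1up_arc_factors D n.-1 w right; rewrite prednK // => -> //.
rewrite (card_arcs uniq) expr_sum -big_split /=; apply: eq_bigr => j _.
rewrite /choice_weight ffunE /arc_factor; case: left_arcP => [p pD pj | _] /=.
  by have := adj p pD; rewrite pj => ->; rewrite expr1 mulN1r.
by rewrite expr0 mul1r.
Qed.

Lemma sum_choices_diagrams (a : nat -> nat) (w : seq nat) :
  (0 < n)%N -> size w = n ->
  \sum_(f : {ffun 'I_n.+1 -> option 'I_n.+1}) \prod_j choice_weight n a w j (f j) =
  \sum_(D : diagram | inAG a D) (-1) ^+ #|D| * e1up D n w.
Proof.
move=> n0 sw; rewrite (bigID (admissible a)) /= [X in _ + X]big1 ?addr0; last first.
  move=> f; rewrite negb_forall => /existsP [j]; case fj: (f j) => [i|] // not_adj.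
  by rewrite (bigD1 j) //= fj /choice_weight (negbTE not_adj) mul0r.
rewrite (partition_big arc_set (inAG a)) /=; last by move=> f; apply: admissible_inAG.
apply: eq_bigr => D inD; rewrite (big_pred1 (arc_choice D)); first exact: diagram_weight.
move=> f /=; apply/andP/eqP => [[adm /eqP <-] | ->]; first by rewrite (arc_setK _ adm).
by rewrite arc_choice_admissible // arc_choiceK //; case/inAGP: inD.
Qed.

End Weights.

Theorem mainTheorem3 (n : nat) (a : nat -> nat)
  (hn : (0 < n)%N)
  (ha1 : (1 <= a 1)%N)
  (hmono : forall k : nat, (1 <= k)%N -> (k < n)%N -> (a k <= a k.+1)%N)
  (hak : forall k : nat, (1 <= k <= n)%N -> (a k <= k)%N) :
  forall w : seq nat, size w = n -> all (fun c => 0 < c)%N w ->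
    @YG n a w =
    \sum_(D : {set 'I_n.+1 * 'I_n.+1} | @inAG n a D) (-1) ^+ #|D| * @e1up n D n w.
Proof.
move=> w sw pw.
rewrite YG_conflict_free // -prod_conflicts prod_conflicts_expand.
exact: sum_choices_diagrams.
Qed.
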